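(* Let $G$ be a torsion-free group acting $\kappa$-acylindrically on a simplicial tree $T$, let $X$ be a graph with an isometric $G$-action, and let $\pi:X\to T$ be a $G$-equivariant $1$-Lipschitz map. Let $g,h\in G$ be loxodromic for the action on $T$, with axes $\alpha_g,\alpha_h$, and suppose $g$ and $h$ have no common nontrivial power. Choose a vertex $x_0\in\pi^{-1}(\alpha_g)$ with $d_X(gx_0,x_0)=\min\{d_X(gx,x): x\in\pi^{-1}(\alpha_g)\}$, choose a vertex $y_0\in\pi^{-1}(\alpha_h)$, and set $A(g)=\{g^nx_0\}_{n\in\mathbf{Z}}$ and $A(h)=\{h^ny_0\}_{n\in\mathbf{Z}}$. Then for each $\epsilon>0$ there is a constant $K$, depending only on $\epsilon$, $\kappa$ and the conjugacy classes of $g$ and $h$, such that $\mathrm{diam}_X(N_\epsilon(A(g))\cap A(h))\le K$.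
   Context: An action on a simplicial tree is $\kappa$-acylindrical if the pointwise stabiliser of every edge path of length at least $\kappa+1$ is trivial. The axis $\alpha_g$ of a loxodromic $g$ is its invariant bi-infinite geodesic. $N_\epsilon(\cdot)$ denotes the closed $\epsilon$-neighbourhood in $X$. Common nontrivial power: $g^m=h^n\neq1$ for some integers $m,n$. *)

From Stdlib Require Import Reals ZArith Lia ClassicalEpsilon.
Open Scope R_scope.
Set Implicit Arguments.

Record Group := {
  gcar :> Type;
  gmul : gcar -> gcar -> gcar;
  gone : gcar;
  ginv : gcar -> gcar;
  gmulA : forall a b c, gmul a (gmul b c) = gmul (gmul a b) c;
  gmul1l : forall a, gmul gone a = a;
  gmulVl : forall a, gmul (ginv a) a = gone }.

Arguments gmul {_} _ _.
Arguments gone {_}.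
Arguments ginv {_} _.

Fixpoint gnpow (G : Group) (g : G) (n : nat) : G :=
  match n with O => gone | S k => gmul g (gnpow G g k) end.

Arguments gnpow {G} _ _.

Definition gpow (G : Group) (g : G) (n : Z) : G :=
  match n with
  | Z0 => gone
  | Zpos p => gnpow g (Pos.to_nat p)
  | Zneg p => ginv (gnpow g (Pos.to_nat p))
  end.

Arguments gpow {G} _ _.

Definition conj (G : Group) (a g : G) : G := gmul (gmul a g) (ginv a).

Arguments conj {G} _ _.

Definition torsion_free (G : Group) : Prop :=
  forall (g : G) (n : nat), (1 <= n)%nat -> gnpow g n = gone -> g = gone.

Definition common_nontrivial_power (G : Group) (g h : G) : Prop :=
  exists m n : Z, gpow g m = gpow h n /\ gpow g m <> gone.

Arguments common_nontrivial_power {G} _ _.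

Record action (G : Group) (V : Type) := {
  act :> G -> V -> V;
  act1 : forall v, act gone v = v;
  actM : forall a b v, act (gmul a b) v = act a (act b v) }.

Arguments act {G V} _ _ _.

Record graph := {
  vert :> Type;
  adj : vert -> vert -> Prop;
  adj_sym : forall x y, adj x y -> adj y x }.

Arguments adj {g} _ _.

Definition walk (V : Type) (e : V -> V -> Prop) (n : nat) (x y : V) : Prop :=
  exists p : nat -> V, p O = x /\ p n = y /\
    forall i, (i < n)%nat -> e (p i) (p (S i)).

Arguments walk {V} _ _ _ _.

Definition connected (V : Type) (e : V -> V -> Prop) : Prop :=
  forall x y : V, exists n, walk e n x y.

Arguments connected {V} _.

(** combinatorial distance: least number of edges of a walk (used only
    on connected graphs) *)
Definition gdist (V : Type) (e : V -> V -> Prop) (x y : V) : nat :=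
  epsilon (inhabits O)
    (fun n => walk e n x y /\ forall m, walk e m x y -> (n <= m)%nat).

Arguments gdist {V} _ _ _.

(** reduced (= geodesic, in a tree) edge path with n edges *)
Definition rpath (V : Type) (e : V -> V -> Prop) (n : nat) (p : nat -> V) : Prop :=
  (forall i, (i < n)%nat -> e (p i) (p (S i))) /\
  (forall i, (S (S i) <= n)%nat -> p i <> p (S (S i))).

Arguments rpath {V} _ _ _.

Record tree := {
  tv :> Type;
  tadj : tv -> tv -> Prop;
  tadj_sym : forall x y, tadj x y -> tadj y x;
  tconn : connected tadj;
  tacyc : forall n p, (1 <= n)%nat -> rpath tadj n p -> p O <> p n }.

Arguments tadj {t} _ _.

Definition dT (T : tree) (u v : T) : nat := gdist (@tadj T) u v.

(** Points of the geometric realization of T: a vertex, or the point of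
    the edge [u,v] at distance t from u (0<t<1). *)
Inductive TPt (V : Type) : Type :=
| TV : V -> TPt V
| TE : V -> V -> R -> TPt V.
Arguments TV {V} _.
Arguments TE {V} _ _ _.

Definition tpt_wf (T : tree) (p : TPt T) : Prop :=
  match p with
  | TV _ => True
  | TE u v t => tadj u v /\ 0 < t < 1
  end.

Arguments dT {T} _ _.
Arguments tpt_wf {T} _.

Definition tdv (T : tree) (p : TPt T) (a : T) : R :=
  match p with
  | TV u => INR (dT u a)
  | TE u v t => Rmin (t + INR (dT u a)) (1 - t + INR (dT v a))
  end.

Arguments tdv {T} _ _.

Definition decP (P : Prop) : bool :=
  if excluded_middle_informative P then true else false.

Definition tdist (T : tree) (p q : TPt T) : R :=
  match p, q with
  | TV u, _ => tdv q u
  | TE u v t, TV w => tdv p w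
  | TE u v t, TE u' v' s =>
      if decP (u = u' /\ v = v') then Rabs (t - s)
      else if decP (u = v' /\ v = u') then Rabs (t - (1 - s))
      else Rmin (t + tdv q u) (1 - t + tdv q v)
  end.

Arguments tdist {T} _ _.

Definition tpact (G : Group) (T : tree) (A : action G T) (g : G) (p : TPt T)
  : TPt T :=
  match p with
  | TV v => TV (A g v)
  | TE u v t => TE (A g u) (A g v) t
  end.

Arguments tpact {G T} _ _ _.

(** action by graph automorphisms (simplicial / isometric action) *)
Definition by_automorphisms (G : Group) (V : Type) (e : V -> V -> Prop)
  (A : action G V) : Prop :=
  forall a x y, e x y <-> e (A a x) (A a y).

Arguments by_automorphisms {G V} _ _.

Definition acylindrical (G : Group) (T : tree) (A : action G T) (kappa : nat)
  : Prop :=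
  forall (n : nat) (p : nat -> T), (kappa + 1 <= n)%nat -> rpath (@tadj T) n p ->
  forall g : G, (forall i, (i <= n)%nat -> A g (p i) = p i) -> g = gone.

Arguments acylindrical {G T} _ _.

(** loxodromic: g fixes no point of the realization of T (positive
    translation length) *)
Definition loxodromic (G : Group) (T : tree) (A : action G T) (g : G) : Prop :=
  forall p : TPt T, tpt_wf p -> 0 < tdist p (tpact A g p).

Arguments loxodromic {G T} _ _.

Definition on_line (T : tree) (l : Z -> T) (p : TPt T) : Prop :=
  match p with
  | TV v => exists k, v = l k
  | TE u v _ => exists k, (u = l k /\ v = l (k + 1)%Z) \/ (u = l (k + 1)%Z /\ v = l k)
  end.

Arguments on_line {T} _ _.

Definition is_axis (G : Group) (T : tree) (A : action G T) (g : G)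
  (alpha : TPt T -> Prop) : Prop :=
  exists l : Z -> T,
    (forall k, tadj (l k) (l (k + 1)%Z)) /\
    (forall k, l k <> l (k + 2)%Z) /\
    (forall k, exists k', A g (l k) = l k') /\
    (forall k, exists k', A g (l k') = l k) /\
    (forall p, alpha p <-> on_line l p).

Arguments is_axis {G T} _ _ _.

Definition in_nbhd_orbit (G : Group) (X : graph) (A : action G X) (eps : R)
  (g : G) (x0 : X) (x : X) : Prop :=
  exists n : Z, INR (gdist (@adj X) x (A (gpow g n) x0)) <= eps.

Arguments in_nbhd_orbit {G X} _ _ _ _ _.

(* The orbit of [x0] projects to within bounded distance of the axis of [g], and that of [y0]
   to the axis of [h]. If the two orbits are [eps]-close at two far-apart points, the axes
   therefore fellow-travel along a long segment. There [g^(+-t_h)] and [h^(t_g)] (with [t_g], [t_h]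
   the translation lengths) shift the segment by the same amount, so [g^(-+t_h) h^(t_g)] fixes a
   subsegment of length > kappa and is trivial by acylindricity: a common nontrivial power.
   The resulting bound is uniform over conjugates because translation lengths are conjugation
   invariant and the minimal displacement of [x0] is at most that of a transported reference point. *)

From Stdlib Require Import Reals ZArith Lia Lra Classical ClassicalEpsilon.
Open Scope R_scope.

Arguments gmulA {_} _ _ _.
Arguments gmul1l {_} _.
Arguments gmulVl {_} _.
Arguments act1 {_ _} _ _.
Arguments actM {_ _} _ _ _ _.

Definition walk_in (V : Type) (e : V -> V -> Prop) (P : V -> Prop) (n : nat) (x y : V) :=
  exists p : nat -> V, p O = x /\ p n = y /\
    (forall i, (i < n)%nat -> e (p i) (p (S i))) /\ (forall i, (i <= n)%nat -> P (p i)).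

Arguments walk_in {V} _ _ _ _ _.

Section Walks.
Variables (V : Type) (e : V -> V -> Prop).
Hypothesis e_sym : forall x y, e x y -> e y x.

Lemma walk_walk_in n x y : walk e n x y <-> walk_in e (fun _ => True) n x y.
Proof.
  split.
  - intros [p [H0 [Hn He]]]. exists p. repeat split; auto.
  - intros [p [H0 [Hn [He _]]]]. exists p. auto.
Qed.

Lemma walk_in_weaken (P Q : V -> Prop) n x y :
  (forall z, P z -> Q z) -> walk_in e P n x y -> walk_in e Q n x y.
Proof. intros HPQ [p [H0 [Hn [He HP]]]]. exists p. repeat split; auto. Qed.

Lemma walk_in_rev P n x y : walk_in e P n x y -> walk_in e P n y x.
Proof.
  intros [p [H0 [Hn [He HP]]]]. exists (fun i => p (n - i)%nat). repeat split.
  - rewrite Nat.sub_0_r. exact Hn.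
  - rewrite Nat.sub_diag. exact H0.
  - intros i Hi. apply e_sym. replace (n - i)%nat with (S (n - S i)) by lia. apply He. lia.
  - intros i Hi. apply HP. lia.
Qed.

Lemma walk_in_cat P n m x y z :
  walk_in e P n x y -> walk_in e P m y z -> walk_in e P (n + m) x z.
Proof.
  intros [p [H0 [Hn [He HP]]]] [q [G0 [Gm [Ge GP]]]].
  exists (fun i => if (i <=? n)%nat then p i else q (i - n)%nat). repeat split.
  - exact H0.
  - destruct (Nat.leb_spec (n + m) n).
    + replace m with 0%nat in * by lia. rewrite Nat.add_0_r, Hn, <- G0, <- Gm. reflexivity.
    + rewrite <- Gm. f_equal. lia.
  - intros i Hi. destruct (Nat.leb_spec i n), (Nat.leb_spec (S i) n).
    + apply He. lia.
    + replace i with n by lia. rewrite Hn, <- G0. replace (S n - n)%nat with 1%nat by lia.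
      apply Ge. lia.
    + lia.
    + replace (S i - n)%nat with (S (i - n)) by lia. apply Ge. lia.
  - intros i Hi. destruct (Nat.leb_spec i n); [apply HP | apply GP]; lia.
Qed.

Lemma walk_refl x : walk e 0 x x.
Proof. exists (fun _ => x). repeat split. intros i Hi. lia. Qed.

Lemma walk_adj x y : e x y -> walk e 1 x y.
Proof.
  intros H. exists (fun i => match i with O => x | _ => y end). repeat split.
  intros i Hi. replace i with 0%nat by lia. exact H.
Qed.

Lemma walk_rev n x y : walk e n x y -> walk e n y x.
Proof. rewrite !walk_walk_in. apply walk_in_rev. Qed.

Lemma walk_cat n m x y z : walk e n x y -> walk e m y z -> walk e (n + m) x z.
Proof. rewrite !walk_walk_in. apply walk_in_cat. Qed.

Section Distance.
Hypothesis e_conn : connected e.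

Lemma gdist_spec x y :
  walk e (gdist e x y) x y /\ forall m, walk e m x y -> (gdist e x y <= m)%nat.
Proof.
  unfold gdist. apply epsilon_spec.
  destruct (Wf_nat.dec_inh_nat_subset_has_unique_least_element (fun n => walk e n x y)
              (fun n => classic _) (e_conn x y)) as [n [[Hn Hmin] _]].
  exists n. auto.
Qed.

Lemma gdist_walk x y : walk e (gdist e x y) x y.
Proof. apply gdist_spec. Qed.

Lemma gdist_le_walk x y m : walk e m x y -> (gdist e x y <= m)%nat.
Proof. apply gdist_spec. Qed.

Lemma gdist_refl x : gdist e x x = 0%nat.
Proof. pose proof (gdist_le_walk x x 0 (walk_refl x)). lia. Qed.

Lemma gdist_sym x y : gdist e x y = gdist e y x.
Proof. apply Nat.le_antisymm; apply gdist_le_walk, walk_rev, gdist_walk. Qed.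

Lemma gdist_triangle x y z : (gdist e x z <= gdist e x y + gdist e y z)%nat.
Proof. apply gdist_le_walk. eapply walk_cat; apply gdist_walk. Qed.

Lemma gdist_adj x y : e x y -> (gdist e x y <= 1)%nat.
Proof. intro H. apply gdist_le_walk, walk_adj, H. Qed.

Lemma gdist_eq0 x y : gdist e x y = 0%nat -> x = y.
Proof. intros H. destruct (gdist_walk x y) as [p [H0 [Hn _]]]. rewrite H in Hn. congruence. Qed.

Lemma gdist_walk_in_ball x y :
  walk_in e (fun z => (gdist e x z <= gdist e x y)%nat) (gdist e x y) x y.
Proof.
  destruct (gdist_walk x y) as [p [H0 [Hn He]]]. exists p. repeat split; auto.
  intros i Hi. apply Nat.le_trans with i; [|exact Hi].
  apply gdist_le_walk. exists p. repeat split; auto. intros j Hj. apply He. lia.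
Qed.

Lemma gdist_map_le (f : V -> V) : (forall x y, e x y -> e (f x) (f y)) ->
  forall x y, (gdist e (f x) (f y) <= gdist e x y)%nat.
Proof.
  intros Hf x y. apply gdist_le_walk. destruct (gdist_walk x y) as [p [H0 [Hn He]]].
  exists (fun i => f (p i)). repeat split; try congruence. intros i Hi. apply Hf, He, Hi.
Qed.

Lemma gdist_Zseq_le (F : Z -> V) (D : nat) :
  (forall k, (gdist e (F (k + 1)%Z) (F k) <= D)%nat) ->
  forall n n', (gdist e (F n) (F n') <= Z.to_nat (Z.abs (n - n')) * D)%nat.
Proof.
  intros HD.
  assert (Hup : forall (N : nat) j, (gdist e (F (j + Z.of_nat N)%Z) (F j) <= N * D)%nat).
  { induction N as [|N IH]; intros j.
    - replace (j + Z.of_nat 0)%Z with j by lia. rewrite gdist_refl. lia.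
    - pose proof (gdist_triangle (F (j + Z.of_nat (S N))%Z) (F (j + Z.of_nat N)%Z) (F j)).
      pose proof (HD (j + Z.of_nat N)%Z) as Hs.
      replace (j + Z.of_nat N + 1)%Z with (j + Z.of_nat (S N))%Z in Hs by lia.
      specialize (IH j). rewrite Nat.mul_succ_l. lia. }
  assert (Hle : forall n n', (n' <= n)%Z ->
            (gdist e (F n) (F n') <= Z.to_nat (Z.abs (n - n')) * D)%nat).
  { intros n n' Hn. pose proof (Hup (Z.to_nat (n - n')) n') as H.
    rewrite Z2Nat.id in H by lia. replace (n' + (n - n'))%Z with n in H by lia.
    replace (Z.abs (n - n')) with (n - n')%Z by lia. exact H. }
  intros n n'. destruct (Z.le_gt_cases n' n) as [Hn|Hn]; [now apply Hle|].
  rewrite gdist_sym. replace (Z.abs (n - n')) with (Z.abs (n' - n)) by lia. apply Hle. lia.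
Qed.

End Distance.

Lemma rpath_tail k p : rpath e (S k) p -> rpath e k (fun i => p (S i)).
Proof. intros [H1 H2]. split; intros i Hi; [apply H1 | apply H2]; lia. Qed.

Lemma rpath_rev n p : rpath e n p -> rpath e n (fun i => p (n - i)%nat).
Proof.
  intros [H1 H2]. split.
  - intros i Hi. apply e_sym. replace (n - i)%nat with (S (n - S i)) by lia. apply H1. lia.
  - intros i Hi Hc. apply (H2 (n - S (S i))%nat); [lia|].
    replace (S (S (n - S (S i)))) with (n - i)%nat by lia. rewrite Hc. reflexivity.
Qed.

Lemma rpath_cat n m p q : rpath e n p -> rpath e m q -> p n = q O ->
  ((1 <= n)%nat -> (1 <= m)%nat -> p (n - 1)%nat <> q 1%nat) ->
  rpath e (n + m) (fun i => if (i <=? n)%nat then p i else q (i - n)%nat).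
Proof.
  intros [P1 P2] [Q1 Q2] J Jr. split.
  - intros i Hi. destruct (Nat.leb_spec i n), (Nat.leb_spec (S i) n).
    + apply P1. lia.
    + replace i with n by lia. rewrite J. replace (S n - n)%nat with 1%nat by lia. apply Q1. lia.
    + lia.
    + replace (S i - n)%nat with (S (i - n)) by lia. apply Q1. lia.
  - intros i Hi. destruct (Nat.leb_spec i n), (Nat.leb_spec (S (S i)) n).
    + apply P2. lia.
    + destruct (Nat.eq_dec (S i) n).
      * subst n. replace (S (S i) - S i)%nat with 1%nat by lia.
        replace i with (S i - 1)%nat at 1 by lia. apply Jr; lia.
      * replace i with n by lia. rewrite J. replace (S (S n) - n)%nat with 2%nat by lia.
        apply (Q2 0%nat). lia.
    + lia.
    + replace (S (S i) - n)%nat with (S (S (i - n))) by lia. apply Q2. lia.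
Qed.

(* Backtracking is cut out: a spike [u, v, u] is removed when it appears. *)
Lemma walk_in_reduce (P : V -> Prop) n u v : walk_in e P n u v ->
  exists k r, (k <= n)%nat /\ r O = u /\ r k = v /\ rpath e k r /\
    forall i, (i <= k)%nat -> P (r i).
Proof.
  revert u v. induction n as [|n IH]; intros u v [p [H0 [Hn [He HP]]]].
  - exists 0%nat, (fun _ => u). repeat split; try lia; try congruence.
    intros i Hi. rewrite <- H0. apply HP. lia.
  - destruct (IH (p 1%nat) v) as [k [r [Hk [R0 [Rk [Rp RP]]]]]].
    { exists (fun i => p (S i)). repeat split; auto; intros i Hi; [apply He | apply HP]; lia. }
    destruct k as [|k].
    + exists 1%nat, (fun i => match i with O => u | _ => v end). repeat split; try lia.
      * intros i Hi. replace i with 0%nat by lia. rewrite <- H0, <- Rk, R0. apply He. lia.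
      * intros [|i] Hi; [rewrite <- H0; apply HP | rewrite <- Rk; apply RP]; lia.
    + destruct (classic (r 1%nat = u)) as [Heq|Hne].
      * exists k, (fun i => r (S i)).
        split; [lia | split; [exact Heq | split; [exact Rk | split]]].
        -- apply rpath_tail, Rp.
        -- intros i Hi. apply RP. lia.
      * exists (S (S k)), (fun i => match i with O => u | S j => r j end).
        repeat split; auto; try lia.
        -- intros [|i] Hi; [rewrite R0, <- H0; apply He | apply Rp]; lia.
        -- intros [|i] Hi; [intro Hc; apply Hne; auto | apply Rp; lia].
        -- intros [|i] Hi; [rewrite <- H0; apply HP | apply RP]; lia.
Qed.

End Walks.

Section Trees.
Variable T : tree.
Implicit Types u v w : T.

Lemma dT_sym u v : dT u v = dT v u.
Proof. apply gdist_sym; [apply tadj_sym | apply tconn]. Qed.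

Lemma dT_triangle u v w : (dT u w <= dT u v + dT v w)%nat.
Proof. apply gdist_triangle, tconn. Qed.

Lemma dT_refl u : dT u u = 0%nat.
Proof. apply gdist_refl, tconn. Qed.

Lemma dT_adj u v : tadj u v -> (dT u v <= 1)%nat.
Proof. apply gdist_adj, tconn. Qed.

Lemma dT_eq0 u v : dT u v = 0%nat -> u = v.
Proof. apply gdist_eq0, tconn. Qed.

Lemma rpath_unique n p m q : rpath (@tadj T) n p -> rpath (@tadj T) m q ->
  p O = q O -> p n = q m -> n = m /\ forall i, (i <= n)%nat -> p i = q i.
Proof.
  revert p m q. induction n as [|n IH]; intros p [|m] q Hp Hq E0 En.
  - split; auto. intros i Hi. replace i with 0%nat by lia. exact E0.
  - exfalso. apply (@tacyc T (S m) q); [lia | auto | congruence].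
  - exfalso. apply (@tacyc T (S n) p); [lia | auto | congruence].
  - destruct (classic (p 1%nat = q 1%nat)) as [E1|E1].
    + destruct (IH (fun i => p (S i)) m (fun i => q (S i))) as [Hnm Hall];
        try apply rpath_tail; auto.
      split; [lia|]. intros [|i] Hi; auto. apply Hall. lia.
    + exfalso.
      assert (Hloop := rpath_cat _ _ (S n) (S m) _ q (rpath_rev _ _ (@tadj_sym T) _ _ Hp) Hq).
      cbv beta in Hloop. rewrite Nat.sub_diag in Hloop.
      replace (S n - (S n - 1))%nat with 1%nat in Hloop by lia.
      apply (@tacyc T (S n + S m) _ ltac:(lia) (Hloop E0 (fun _ _ => E1))).
      destruct (Nat.leb_spec 0 (S n)); [|lia].
      destruct (Nat.leb_spec (S n + S m) (S n)); [lia|].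
      rewrite Nat.sub_0_r, En. f_equal. lia.
Qed.

Lemma rpath_geodesic n p : rpath (@tadj T) n p -> dT (p O) (p n) = n.
Proof.
  intros Hp. apply Nat.le_antisymm.
  - apply gdist_le_walk; [apply tconn|]. exists p. repeat split; auto. apply Hp.
  - destruct (walk_in_reduce _ (@tadj T) (fun _ => True) (dT (p O) (p n)) (p O) (p n))
      as [k [r [Hk [R0 [Rk [Rp _]]]]]].
    { apply walk_walk_in, gdist_walk, tconn. }
    destruct (rpath_unique k r n p Rp Hp R0 Rk) as [<- _]. exact Hk.
Qed.

Lemma rpath_walk_in P N n p : rpath (@tadj T) n p -> walk_in (@tadj T) P N (p O) (p n) ->
  forall i, (i <= n)%nat -> P (p i).
Proof.
  intros Hp Hw i Hi.
  destruct (walk_in_reduce _ _ P _ _ _ Hw) as [k [r [_ [R0 [Rk [Rp RP]]]]]].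
  destruct (rpath_unique k r n p Rp Hp R0 Rk) as [<- Hall].
  rewrite <- Hall; auto.
Qed.

End Trees.

Definition line (T : tree) (l : Z -> T) : Prop :=
  (forall k, tadj (l k) (l (k + 1)%Z)) /\ (forall k, l k <> l (k + 2)%Z).

Arguments line {T} _.

Section Lines.
Variable T : tree.
Implicit Types l : Z -> T.

Lemma line_rpath l i n : line l -> rpath (@tadj T) n (fun t => l (i + Z.of_nat t)%Z).
Proof.
  intros [H1 H2]. split; intros t _.
  - replace (i + Z.of_nat (S t))%Z with (i + Z.of_nat t + 1)%Z by lia. apply H1.
  - replace (i + Z.of_nat (S (S t)))%Z with (i + Z.of_nat t + 2)%Z by lia. apply H2.
Qed.

Lemma line_dist l i j : line l -> dT (l i) (l j) = Z.to_nat (Z.abs (j - i)).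
Proof.
  intros Hl.
  assert (Hle : forall i j, (i <= j)%Z -> dT (l i) (l j) = Z.to_nat (Z.abs (j - i))).
  { intros a b Hab. pose proof (rpath_geodesic T _ _ (line_rpath l a (Z.to_nat (b - a)) Hl)) as H.
    cbv beta in H. rewrite Z2Nat.id in H by lia.
    replace (a + Z.of_nat 0)%Z with a in H by lia. replace (a + (b - a))%Z with b in H by lia.
    rewrite H. f_equal. lia. }
  destruct (Z.le_gt_cases i j); [now apply Hle|].
  rewrite dT_sym, Hle by lia. f_equal. lia.
Qed.

Lemma line_inj l i j : line l -> l i = l j -> i = j.
Proof. intros Hl E. pose proof (line_dist l i j Hl) as H. rewrite E, dT_refl in H. lia. Qed.

Lemma line_walk_in l a b : line l ->
  walk_in (@tadj T) (fun z => exists c, z = l c) (Z.to_nat (Z.abs (b - a))) (l a) (l b).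
Proof.
  intros Hl.
  assert (Hle : forall a b, (a <= b)%Z ->
    walk_in (@tadj T) (fun z => exists c, z = l c) (Z.to_nat (Z.abs (b - a))) (l a) (l b)).
  { intros x y Hxy. exists (fun t => l (x + Z.of_nat t)%Z).
    repeat split; [f_equal; lia | f_equal; rewrite Z2Nat.id; lia | | eauto].
    intros i _. apply (line_rpath l x (S i) Hl). lia. }
  destruct (Z.le_gt_cases a b); [now apply Hle|].
  apply walk_in_rev; [apply tadj_sym|].
  replace (Z.abs (b - a)) with (Z.abs (a - b)) by lia. apply Hle. lia.
Qed.

Lemma line_fellow_travel l1 l2 i j a b (E : nat) : line l1 -> line l2 -> (i < j)%Z ->
  (dT (l1 i) (l2 a) <= E)%nat -> (dT (l1 j) (l2 b) <= E)%nat ->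
  forall k, (i + Z.of_nat E < k < j - Z.of_nat E)%Z -> exists c, l1 k = l2 c.
Proof.
  intros L1 L2 Hij Ha Hb k Hk.
  set (P := fun z => (dT (l1 i) z <= E)%nat \/ (exists c, z = l2 c) \/ (dT (l1 j) z <= E)%nat).
  assert (Hball : forall x y, (dT x y <= E)%nat ->
            walk_in (@tadj T) (fun z => (dT x z <= E)%nat) (dT x y) x y).
  { intros x y Hxy. eapply walk_in_weaken; [|apply gdist_walk_in_ball, tconn].
    intros z Hz. unfold dT in *. lia. }
  assert (W : walk_in (@tadj T) P
                (dT (l1 i) (l2 a) + Z.to_nat (Z.abs (b - a)) + dT (l1 j) (l2 b)) (l1 i) (l1 j)).
  { apply walk_in_cat with (l2 b); [apply walk_in_cat with (l2 a)|].
    - eapply walk_in_weaken; [|apply Hball, Ha]. unfold P; tauto.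
    - eapply walk_in_weaken; [|apply line_walk_in, L2]. unfold P; tauto.
    - apply walk_in_rev; [apply tadj_sym|].
      eapply walk_in_weaken; [|apply Hball, Hb]. unfold P; tauto. }
  set (n := Z.to_nat (j - i)).
  replace (l1 i) with (l1 (i + Z.of_nat 0)%Z) in W by (f_equal; lia).
  replace (l1 j) with (l1 (i + Z.of_nat n)%Z) in W by (f_equal; unfold n; lia).
  pose proof (rpath_walk_in T P _ n _ (line_rpath l1 i n L1) W (Z.to_nat (k - i))
                ltac:(unfold n; lia)) as Hc.
  cbv beta in Hc. rewrite Z2Nat.id in Hc by lia. replace (i + (k - i))%Z with k in Hc by lia.
  destruct Hc as [Hc|[[c Hc]|Hc]]; [| eauto |]; rewrite line_dist in Hc by auto; lia.
Qed.

Lemma line_sub_line l1 l2 : line l1 -> line l2 -> (forall k, exists c, l2 k = l1 c) ->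
  forall k, exists c, (l2 k = l1 c /\ l2 (k + 1)%Z = l1 (c + 1)%Z) \/
                      (l2 k = l1 (c + 1)%Z /\ l2 (k + 1)%Z = l1 c).
Proof.
  intros L1 L2 Hsub k. destruct (Hsub k) as [c1 E1], (Hsub (k + 1)%Z) as [c2 E2].
  assert (D : dT (l1 c1) (l1 c2) = 1%nat).
  { rewrite <- E1, <- E2, line_dist by auto. replace (k + 1 - k)%Z with 1%Z by lia. reflexivity. }
  rewrite line_dist in D by auto.
  destruct (Z.eq_dec c2 (c1 + 1)) as [->|Hne].
  - exists c1. left. auto.
  - exists c2. right. split; auto. rewrite E1. f_equal. lia.
Qed.

End Lines.

Lemma decP_true (P : Prop) : decP P = true -> P.
Proof. unfold decP. destruct (excluded_middle_informative P); auto; discriminate. Qed.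

Lemma decP_false (P : Prop) : decP P = false -> ~ P.
Proof. unfold decP. destruct (excluded_middle_informative P); auto; discriminate. Qed.

Definition tpt_base (T : tree) (p : TPt T) : T := match p with TV u => u | TE u _ _ => u end.

Arguments tpt_base {T} _.

Section Realization.
Variable T : tree.
Implicit Types (u v w : T) (l : Z -> T).

Lemma INR_dT_triangle u v w : INR (dT u w) <= INR (dT u v) + INR (dT v w).
Proof. rewrite <- plus_INR. apply le_INR, dT_triangle. Qed.

Lemma INR_dT_adj u v : tadj u v -> INR (dT u v) <= 1.
Proof. intros H. apply (le_INR _ 1), dT_adj, H. Qed.

Lemma INR_dT_sym u v : INR (dT u v) = INR (dT v u).
Proof. now rewrite dT_sym. Qed.

Lemma tdv_nonneg (q : TPt T) a : tpt_wf q -> 0 <= tdv q a.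
Proof.
  destruct q as [w|w w' s]; simpl; intros Hq; [apply pos_INR|].
  destruct Hq as [_ Hs]. pose proof (pos_INR (dT w a)). pose proof (pos_INR (dT w' a)).
  unfold Rmin; destruct (Rle_dec _ _); lra.
Qed.

Lemma dT_tpt_base_le (p q : TPt T) : tpt_wf p -> tpt_wf q ->
  INR (dT (tpt_base p) (tpt_base q)) <= tdist p q + 2.
Proof.
  destruct p as [u|u v t], q as [w|w w' s]; simpl; intros Hp Hq.
  - rewrite INR_dT_sym. lra.
  - destruct Hq as [Ha Hs].
    pose proof (INR_dT_triangle u w' w). pose proof (INR_dT_adj _ _ (tadj_sym _ _ _ Ha)).
    pose proof (INR_dT_sym u w'). pose proof (INR_dT_sym u w). pose proof (pos_INR (dT u w')).
    unfold Rmin; destruct (Rle_dec _ _); lra.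
  - destruct Hp as [Ha Ht].
    pose proof (INR_dT_triangle u v w). pose proof (INR_dT_adj _ _ Ha). pose proof (pos_INR (dT v w)).
    unfold Rmin; destruct (Rle_dec _ _); lra.
  - destruct Hp as [Ha Ht], Hq as [Hb Hs].
    destruct (decP (u = w /\ v = w')) eqn:D1.
    { apply decP_true in D1. destruct D1 as [-> ->]. rewrite dT_refl. simpl.
      pose proof (Rabs_pos (t - s)). lra. }
    destruct (decP (u = w' /\ v = w)) eqn:D2.
    { apply decP_true in D2. destruct D2 as [-> ->].
      pose proof (INR_dT_adj _ _ Ha). pose proof (Rabs_pos (t - (1 - s))). lra. }
    simpl.
    pose proof (INR_dT_sym u w).
    pose proof (INR_dT_triangle u w' w). pose proof (INR_dT_adj _ _ (tadj_sym _ _ _ Hb)).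
    pose proof (INR_dT_sym u w'). pose proof (INR_dT_triangle u v w). pose proof (INR_dT_adj _ _ Ha).
    pose proof (INR_dT_sym v w). pose proof (INR_dT_triangle v w' w). pose proof (INR_dT_sym v w').
    pose proof (pos_INR (dT u w)). pose proof (pos_INR (dT v w)).
    pose proof (pos_INR (dT u w')). pose proof (pos_INR (dT v w')).
    repeat (unfold Rmin; destruct (Rle_dec _ _)); lra.
Qed.

Lemma tdist_eq0_on_line l (p q : TPt T) : tpt_wf p -> tpt_wf q -> tdist p q = 0 ->
  on_line l q -> on_line l p.
Proof.
  destruct p as [u|u v t], q as [w|w w' s]; simpl; intros Hp Hq H0 Hl.
  - apply (INR_eq _ 0), dT_eq0 in H0. subst. exact Hl.
  - exfalso. destruct Hq as [_ Hs]. pose proof (pos_INR (dT w u)). pose proof (pos_INR (dT w' u)).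
    revert H0. unfold Rmin; destruct (Rle_dec _ _); lra.
  - exfalso. destruct Hp as [_ Ht]. pose proof (pos_INR (dT u w)). pose proof (pos_INR (dT v w)).
    revert H0. unfold Rmin; destruct (Rle_dec _ _); lra.
  - revert H0. destruct (decP (u = w /\ v = w')) eqn:D1.
    { apply decP_true in D1. destruct D1 as [-> ->]. auto. }
    destruct (decP (u = w' /\ v = w)) eqn:D2.
    { intros _. apply decP_true in D2. destruct D2 as [-> ->].
      destruct Hl as [k [[A1 A2]|[A1 A2]]]; exists k; tauto. }
    intros H0. exfalso. destruct Hp as [_ Ht].
    pose proof (tdv_nonneg (TE w w' s) u Hq). pose proof (tdv_nonneg (TE w w' s) v Hq).
    assert (0 < Rmin (t + tdv (TE w w' s) u) (1 - t + tdv (TE w w' s) v))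
      by (apply Rmin_glb_lt; lra).
    simpl in *. lra.
Qed.

Lemma on_line_tpt_base l p : on_line l p -> exists k, tpt_base p = l k.
Proof. destruct p; simpl; [intros [k ->] | intros [k [[-> ->]|[-> ->]]]]; eauto. Qed.

Lemma on_line_sub l l' p : line l -> line l' -> (forall k, exists c, l' k = l c) ->
  on_line l' p -> on_line l p.
Proof.
  intros L L' Hsub. destruct p as [u|u v t]; simpl; [intros [k ->]; apply Hsub|].
  intros [k [[-> ->]|[-> ->]]];
    destruct (line_sub_line T l l' L L' Hsub k) as [c [[B1 B2]|[B1 B2]]]; exists c; tauto.
Qed.

End Realization.

Lemma line_reparam_affine (T : tree) (l1 l2 : Z -> T) (phi : Z -> Z) (lo hi j : Z) :
  line l1 -> line l2 -> (lo <= j)%Z -> (j < hi)%Z ->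
  (forall k, (lo <= k <= hi)%Z -> l1 k = l2 (phi k)) ->
  (phi (j + 1) - phi j = 1 \/ phi (j + 1) - phi j = -1)%Z /\
  forall k, (lo <= k <= hi)%Z -> phi k = (phi j + (phi (j + 1) - phi j) * (k - j))%Z.
Proof.
  intros L1 L2 Hj Hjh Hphi.
  assert (Iso : forall k k', (lo <= k <= hi)%Z -> (lo <= k' <= hi)%Z ->
                 Z.abs (phi k - phi k') = Z.abs (k - k')).
  { intros k k' Hk Hk'. pose proof (line_dist T l2 (phi k') (phi k) L2) as D.
    rewrite <- !Hphi, line_dist in D by auto. lia. }
  pose proof (Iso (j + 1)%Z j ltac:(lia) ltac:(lia)).
  assert (S : (phi (j + 1) - phi j = 1 \/ phi (j + 1) - phi j = -1)%Z) by lia.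
  split; [exact S|]. intros k Hk.
  pose proof (Iso k j Hk ltac:(lia)). pose proof (Iso k (j + 1)%Z Hk ltac:(lia)).
  destruct S as [S|S]; rewrite S; lia.
Qed.

Section Groups.
Variable G : Group.
Implicit Types a b g : G.

Lemma gmulVr a : gmul a (ginv a) = gone.
Proof.
  assert (H1 : gmul (ginv a) (gmul a (ginv a)) = ginv a) by now rewrite gmulA, gmulVl, gmul1l.
  rewrite <- (gmul1l (gmul a (ginv a))), <- (gmulVl (ginv a)), <- gmulA, H1. reflexivity.
Qed.

Lemma gmul1r a : gmul a gone = a.
Proof. now rewrite <- (gmulVl a), gmulA, gmulVr, gmul1l. Qed.

Lemma gmulV_eq1 a b : gmul (ginv a) b = gone -> b = a.
Proof. intro H. now rewrite <- (gmul1l b), <- (gmulVr a), <- gmulA, H, gmul1r. Qed.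

Lemma ginv_mul a b : ginv (gmul a b) = gmul (ginv b) (ginv a).
Proof.
  symmetry. rewrite <- (gmul1r (gmul (ginv b) (ginv a))), <- (gmulVr (gmul a b)).
  rewrite gmulA, <- (gmulA (ginv b)), (gmulA (ginv a) a), gmulVl, gmul1l, gmulVl, gmul1l.
  reflexivity.
Qed.

Lemma gnpow_comm g n : gmul g (gnpow g n) = gmul (gnpow g n) g.
Proof.
  induction n as [|n IH]; simpl; [now rewrite gmul1l, gmul1r|].
  now rewrite IH at 1; rewrite gmulA.
Qed.

Lemma gpow_succ g n : gpow g (n + 1) = gmul g (gpow g n).
Proof.
  destruct n as [|p|p]; [reflexivity | |].
  - simpl. now rewrite Pos2Nat.inj_add, Nat.add_1_r.
  - destruct (Pos.succ_pred_or p) as [->|Hp]; [simpl; now rewrite gmul1r, gmulVr|].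
    rewrite <- Hp. replace (Z.neg (Pos.succ (Pos.pred p)) + 1)%Z with (Z.neg (Pos.pred p)) by lia.
    simpl. rewrite Pos2Nat.inj_succ. simpl.
    now rewrite gnpow_comm, ginv_mul, gmulA, gmulVr, gmul1l.
Qed.

End Groups.

Definition translates (G : Group) (V : Type) (A : action G V) (f : G) (F : Z -> V) (t : Z) :=
  forall k, A f (F k) = F (k + t)%Z.

Arguments translates {G V} _ _ _ _.

Section Actions.
Variables (G : Group) (V : Type) (A : action G V).
Implicit Types (a b g : G) (v w : V).

Lemma act_invl a v : A (ginv a) (A a v) = v.
Proof. now rewrite <- actM, gmulVl, act1. Qed.

Lemma act_inj a v w : A a v = A a w -> v = w.
Proof. intro H. now rewrite <- (act_invl a v), H, act_invl. Qed.

Lemma act_conj a g v : A (conj a g) v = A a (A g (A (ginv a) v)).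
Proof. unfold conj. now rewrite !actM. Qed.

Lemma act_conj_transport a a0 g v :
  A (conj a g) (A (gmul a (ginv a0)) v) = A (gmul a (ginv a0)) (A (conj a0 g) v).
Proof. now rewrite !act_conj, !actM, !act_invl. Qed.

Lemma translates_gpow g (F : Z -> V) t :
  translates A g F t -> forall n, translates A (gpow g n) F (n * t).
Proof.
  intros HF.
  assert (Hn : forall N, translates A (gnpow g N) F (Z.of_nat N * t)).
  { induction N as [|N IH]; intro j; cbn [gnpow].
    - rewrite act1. f_equal. lia.
    - rewrite actM, IH, HF. f_equal. lia. }
  intros [|p|p] j; unfold gpow.
  - rewrite act1. f_equal. lia.
  - rewrite Hn. f_equal. lia.
  - replace (F j) with (A (gnpow g (Pos.to_nat p)) (F (j + Z.neg p * t)%Z)) at 1.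
    + apply act_invl.
    + rewrite Hn. f_equal. lia.
Qed.

Lemma translates_orbit g v : translates A g (fun k => A (gpow g k) v) 1.
Proof. intro k. cbv beta. now rewrite gpow_succ, actM. Qed.

Lemma gdist_act (e : V -> V -> Prop) : connected e -> by_automorphisms e A ->
  forall a v w, gdist e (A a v) (A a w) = gdist e v w.
Proof.
  intros Hc HA a v w. apply Nat.le_antisymm.
  - apply gdist_map_le; [exact Hc|]. intros x y. apply HA.
  - pose proof (gdist_map_le _ _ Hc (A (ginv a)) (fun x y => proj1 (HA (ginv a) x y))
                  (A a v) (A a w)) as H.
    now rewrite !act_invl in H.
Qed.

End Actions.

Section TreeActions.
Variables (G : Group) (T : tree) (A : action G T).
Hypothesis A_aut : by_automorphisms (@tadj T) A.
Implicit Types (a b f g : G) (l : Z -> T).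

Lemma dT_act a (u v : T) : dT (A a u) (A a v) = dT u v.
Proof. apply gdist_act; [apply tconn | exact A_aut]. Qed.

Lemma line_act a l : line l -> line (fun k => A a (l k)).
Proof.
  intros [L1 L2]. split; intros k; [apply A_aut, L1 |].
  intros Hk. apply act_inj in Hk. exact (L2 k Hk).
Qed.

Lemma tpt_wf_tpact a p : tpt_wf p -> tpt_wf (tpact A a p).
Proof. destruct p; simpl; auto. intros [H1 H2]. split; auto. apply A_aut, H1. Qed.

Lemma tpt_base_tpact a p : tpt_base (tpact A a p) = A a (tpt_base p).
Proof. destruct p; reflexivity. Qed.

Lemma on_line_tpact a l p : on_line l p -> on_line (fun k => A a (l k)) (tpact A a p).
Proof. destruct p; simpl; [intros [k ->] | intros [k [[-> ->]|[-> ->]]]]; eauto. Qed.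

Lemma translates_dT f l t : line l -> translates A f l t ->
  forall k, dT (l k) (A f (l k)) = Z.to_nat (Z.abs t).
Proof. intros L H k. rewrite H, line_dist by auto. f_equal. lia. Qed.

Lemma loxodromic_conj_no_fixed_vertex g a : loxodromic A g -> forall v, A (conj a g) v <> v.
Proof.
  intros Hl v Hv. rewrite act_conj in Hv. apply (f_equal (A (ginv a))) in Hv.
  rewrite !act_invl in Hv. specialize (Hl (TV (A (ginv a) v)) I). simpl in Hl.
  rewrite Hv, dT_refl in Hl. simpl in Hl. lra.
Qed.

Lemma loxodromic_conj_no_inversion g a : loxodromic A g ->
  forall u v, tadj u v -> A (conj a g) u = v -> A (conj a g) v = u -> False.
Proof.
  intros Hl u v Ha Hu Hv. rewrite act_conj in Hu, Hv.
  apply (f_equal (A (ginv a))) in Hu, Hv. rewrite act_invl in Hu, Hv.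
  set (w1 := A (ginv a) u) in *. set (w2 := A (ginv a) v) in *.
  assert (Hwf : tpt_wf (TE w1 w2 (/2))) by (split; [apply A_aut, Ha | lra]).
  specialize (Hl _ Hwf). simpl in Hl. rewrite Hu, Hv in Hl.
  revert Hl. destruct (decP (w1 = w2 /\ w2 = w1)) eqn:D1.
  - replace (/2 - /2) with 0 by lra. rewrite Rabs_R0. lra.
  - destruct (decP (w1 = w1 /\ w2 = w2)) eqn:D2.
    + replace (/2 - (1 - /2)) with 0 by lra. rewrite Rabs_R0. lra.
    + apply decP_false in D2. tauto.
Qed.

(* An isometry of a line is a translation or a reflection; a reflection fixes a vertex or
   inverts an edge, according to the parity of its centre. *)
Lemma line_translation f l : line l -> (forall k, exists k', A f (l k) = l k') ->
  (forall v, A f v <> v) -> (forall u v, tadj u v -> A f u = v -> A f v = u -> False) ->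
  exists t, t <> 0%Z /\ translates A f l t.
Proof.
  intros L Hinv Hfix Hflip.
  set (phi := fun k => epsilon (inhabits 0%Z) (fun c => A f (l k) = l c)).
  assert (Hphi : forall k, A f (l k) = l (phi k)).
  { intros k. apply (epsilon_spec (inhabits 0%Z) (fun c => A f (l k) = l c)), Hinv. }
  assert (Aff : forall k, (phi (0 + 1) - phi 0 = 1 \/ phi (0 + 1) - phi 0 = -1)%Z /\
                          phi k = (phi 0 + (phi (0 + 1) - phi 0) * (k - 0))%Z).
  { intros k. destruct (line_reparam_affine T _ l phi (- Z.abs k - 1) (Z.abs k + 1) 0
                          (line_act f l L) L ltac:(lia) ltac:(lia) (fun k _ => Hphi k)) as [S Ha].
    split; [exact S | apply Ha; lia]. }
  destruct (Aff 0%Z) as [[S|S] _]; rewrite S in Aff.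
  - exists (phi 0%Z). split.
    + intro H0. apply (Hfix (l 0%Z)). now rewrite Hphi, H0.
    + intros k. rewrite Hphi, (proj2 (Aff k)). f_equal. lia.
  - exfalso. destruct (Z.Even_or_Odd (phi 0%Z)) as [[m Hm]|[m Hm]].
    + apply (Hfix (l m)). rewrite Hphi, (proj2 (Aff m)). f_equal. lia.
    + apply (Hflip (l m) (l (m + 1)%Z)); [apply L | |];
        rewrite Hphi, (proj2 (Aff _)); f_equal; lia.
Qed.

Lemma axis_translation g a alpha : loxodromic A g -> is_axis A (conj a g) alpha ->
  exists l t, line l /\ t <> 0%Z /\ translates A (conj a g) l t /\
    forall p, alpha p <-> on_line l p.
Proof.
  intros Hl [l [Hadj [Hr [Hi [_ Hal]]]]].
  assert (L : line l) by (split; auto).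
  destruct (line_translation (conj a g) l L Hi (loxodromic_conj_no_fixed_vertex g a Hl)
              (loxodromic_conj_no_inversion g a Hl)) as [t [Ht Hs]].
  exists l, t. auto.
Qed.

(* Both lines are invariant under [f], so they stay at bounded distance [E] from each other;
   fellow travelling over arbitrarily long stretches puts every vertex of [l'] on [l]. *)
Lemma translated_line_sub f l l' t t' : line l -> line l' -> t' <> 0%Z ->
  translates A f l t -> translates A f l' t' -> forall k, exists c, l' k = l c.
Proof.
  intros L L' Ht Hl Hl' k.
  set (E := dT (l' 0%Z) (l 0%Z)).
  assert (HM : forall M, dT (l' (M * t')%Z) (l (M * t)%Z) = E).
  { intros M. rewrite <- (Z.add_0_l (M * t')), <- (Z.add_0_l (M * t)).
    rewrite <- (translates_gpow _ _ A f l t Hl M), <- (translates_gpow _ _ A f l' t' Hl' M).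
    apply dT_act. }
  assert (Gen : forall M1 M2, (M1 * t' + Z.of_nat E < k < M2 * t' - Z.of_nat E)%Z ->
            exists c, l' k = l c).
  { intros M1 M2 HH. apply (line_fellow_travel T l' l (M1 * t') (M2 * t') (M1 * t) (M2 * t) E);
      auto; try lia; rewrite HM; lia. }
  set (N := (Z.abs k + Z.of_nat E + 1)%Z).
  destruct (Z.lt_trichotomy t' 0) as [Hn|[Hz|Hp]]; [apply (Gen N (- N)%Z) | lia |
    apply (Gen (- N)%Z N)]; nia.
Qed.

Lemma axis_conj_transport g a a0 l l0 t t0 : line l -> line l0 -> t0 <> 0%Z ->
  translates A (conj a g) l t -> translates A (conj a0 g) l0 t0 ->
  (forall k, exists c, A (gmul a (ginv a0)) (l0 k) = l c) /\ Z.abs t = Z.abs t0.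
Proof.
  intros L L0 H0 Hs Hs0.
  assert (Hsub : forall k, exists c, A (gmul a (ginv a0)) (l0 k) = l c).
  { apply (translated_line_sub (conj a g) l _ t t0 L (line_act _ l0 L0) H0 Hs).
    intros k. now rewrite act_conj_transport, Hs0. }
  split; [exact Hsub|].
  destruct (Hsub 0%Z) as [c1 Hc1].
  pose proof (translates_dT _ l t L Hs c1) as D1.
  pose proof (translates_dT _ l0 t0 L0 Hs0 0%Z) as D0.
  rewrite <- Hc1, act_conj_transport, dT_act in D1. lia.
Qed.

Section Acylindrical.
Variable kappa : nat.
Hypothesis A_acyl : acylindrical A kappa.

(* [g'^(+-t2)] and [h'^t1] shift the common segment by the same amount, so
   [g'^(-+t2) h'^t1] fixes a subsegment of length [L - |t1 t2|]. *)
Lemma no_long_common_segment g' h' l1 l2 t1 t2 : line l1 -> line l2 -> t1 <> 0%Z -> t2 <> 0%Z ->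
  translates A g' l1 t1 -> translates A h' l2 t2 -> ~ common_nontrivial_power g' h' ->
  forall (B : Z) (L : nat), (kappa + 1 + Z.to_nat (Z.abs (t1 * t2)) <= L)%nat ->
  ~ (forall k, (B <= k <= B + Z.of_nat L)%Z -> exists c, l1 k = l2 c).
Proof.
  intros L1 L2 H1 H2 O1 O2 Hncp B L HL Hcov.
  set (phi := fun k => epsilon (inhabits 0%Z) (fun c => l1 k = l2 c)).
  assert (Hphi : forall k, (B <= k <= B + Z.of_nat L)%Z -> l1 k = l2 (phi k)).
  { intros k Hk. apply (epsilon_spec (inhabits 0%Z) (fun c => l1 k = l2 c)), Hcov, Hk. }
  destruct (line_reparam_affine T l1 l2 phi B (B + Z.of_nat L) B L1 L2 ltac:(lia) ltac:(lia) Hphi)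
    as [Sg Aff].
  set (sg := (phi (B + 1) - phi B)%Z) in *.
  set (s := (sg * t2 * t1)%Z).
  set (Gp := gpow g' (sg * t2)). set (Hp := gpow h' t1).
  assert (Habs : Z.abs s = Z.abs (t1 * t2)) by (unfold s; destruct Sg as [-> | ->]; lia).
  set (C := if (0 <=? s)%Z then B else (B - s)%Z).
  set (n0 := (L - Z.to_nat (Z.abs s))%nat).
  assert (Hfix : forall i, (i <= n0)%nat ->
            A (gmul (ginv Gp) Hp) (l1 (C + Z.of_nat i)%Z) = l1 (C + Z.of_nat i)%Z).
  { intros i Hi. set (k := (C + Z.of_nat i)%Z).
    assert (Rk : (B <= k <= B + Z.of_nat L)%Z /\ (B <= k + s <= B + Z.of_nat L)%Z).
    { unfold k, C, n0 in *. destruct (Z.leb_spec 0 s); lia. }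
    assert (Eq : (phi k + t1 * t2)%Z = phi (k + s)%Z).
    { rewrite (Aff k), (Aff (k + s)%Z) by tauto. unfold s. destruct Sg as [-> | ->]; lia. }
    rewrite actM, (Hphi k) by tauto. unfold Hp. rewrite (translates_gpow _ _ A h' l2 t2 O2).
    rewrite Eq, <- Hphi by tauto. unfold Gp, s.
    rewrite <- (translates_gpow _ _ A g' l1 t1 O1 (sg * t2) k), act_invl. apply Hphi. tauto. }
  assert (HGH : Hp = Gp).
  { apply gmulV_eq1, (A_acyl n0 _ ltac:(lia) (line_rpath T l1 C n0 L1)), Hfix. }
  apply Hncp. exists (sg * t2)%Z, t1. split; [symmetry; exact HGH|].
  intro Hg. pose proof (translates_gpow _ _ A g' l1 t1 O1 (sg * t2) B) as X.
  rewrite Hg, act1 in X. apply line_inj in X; [|exact L1].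
  destruct Sg as [-> | ->]; nia.
Qed.

Lemma fellow_travel_bound g' h' l1 l2 t1 t2 : line l1 -> line l2 -> t1 <> 0%Z -> t2 <> 0%Z ->
  translates A g' l1 t1 -> translates A h' l2 t2 -> ~ common_nontrivial_power g' h' ->
  forall (E : nat) i j c d, (dT (l1 i) (l2 c) <= E)%nat -> (dT (l1 j) (l2 d) <= E)%nat ->
  (Z.abs (i - j) < Z.of_nat (2 * E + kappa + 3 + Z.to_nat (Z.abs (t1 * t2))))%Z.
Proof.
  intros L1 L2 H1 H2 O1 O2 Hncp E.
  assert (Hlt : forall i j c d, (i < j)%Z -> (dT (l1 i) (l2 c) <= E)%nat ->
            (dT (l1 j) (l2 d) <= E)%nat ->
            (j - i < Z.of_nat (2 * E + kappa + 3 + Z.to_nat (Z.abs (t1 * t2))))%Z).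
  { intros i j c d Hij Hc Hd. apply Z.nle_gt. intros Hlong.
    apply (no_long_common_segment g' h' l1 l2 t1 t2 L1 L2 H1 H2 O1 O2 Hncp
             (i + Z.of_nat E + 1)%Z (kappa + 1 + Z.to_nat (Z.abs (t1 * t2)))); [lia|].
    intros k Hk. apply (line_fellow_travel T l1 l2 i j c d E L1 L2 Hij Hc Hd). lia. }
  intros i j c d Hc Hd.
  destruct (Z.lt_trichotomy i j) as [Hij|[->|Hij]].
  - pose proof (Hlt i j c d Hij Hc Hd). lia.
  - lia.
  - pose proof (Hlt j i d c Hij Hd Hc). lia.
Qed.

End Acylindrical.

End TreeActions.

Section Projection.
Variables (G : Group) (T : tree) (tact : action G T) (X : graph) (xact : action G X)
  (pi : X -> TPt T).
Hypothesis tact_aut : by_automorphisms (@tadj T) tact.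
Hypothesis X_conn : connected (@adj X).
Hypothesis xact_aut : by_automorphisms (@adj X) xact.
Hypothesis pi_wf : forall x, tpt_wf (pi x).
Hypothesis pi_equiv : forall a x, tdist (pi (xact a x)) (tpact tact a (pi x)) = 0.
Hypothesis pi_lip : forall x y, tdist (pi x) (pi y) <= INR (gdist (@adj X) x y).

Local Notation dX := (gdist (@adj X)).
Implicit Types (a b f g h : G) (x y : X) (l : Z -> T).

Lemma dT_proj_le x y : (dT (tpt_base (pi x)) (tpt_base (pi y)) <= dX x y + 2)%nat.
Proof.
  apply INR_le. rewrite plus_INR.
  pose proof (dT_tpt_base_le T _ _ (pi_wf x) (pi_wf y)). pose proof (pi_lip x y).
  simpl (INR 2). lra.
Qed.

Lemma dT_proj_act a x : (dT (tpt_base (pi (xact a x))) (tact a (tpt_base (pi x))) <= 2)%nat.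
Proof.
  apply (INR_le _ 2).
  pose proof (dT_tpt_base_le T _ _ (pi_wf (xact a x)) (tpt_wf_tpact G T tact tact_aut a _ (pi_wf x)))
    as H.
  rewrite pi_equiv, tpt_base_tpact in H. simpl. lra.
Qed.

Lemma proj_orbit_near_line f l t x c : translates tact f l t -> tpt_base (pi x) = l c ->
  forall n, (dT (tpt_base (pi (xact (gpow f n) x))) (l (c + n * t)%Z) <= 2)%nat.
Proof.
  intros Hl Hx n. rewrite <- (translates_gpow _ _ tact f l t Hl n c), <- Hx. apply dT_proj_act.
Qed.

Lemma close_orbits_close_lines g h l1 l2 t1 t2 x y c d (e : nat) :
  translates tact g l1 t1 -> translates tact h l2 t2 ->
  tpt_base (pi x) = l1 c -> tpt_base (pi y) = l2 d ->
  forall n m, (dX (xact (gpow h m) y) (xact (gpow g n) x) <= e)%nat ->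
  (dT (l1 (c + n * t1)%Z) (l2 (d + m * t2)%Z) <= e + 6)%nat.
Proof.
  intros Hl1 Hl2 Hx Hy n m Hd.
  pose proof (dT_proj_le (xact (gpow h m) y) (xact (gpow g n) x)).
  pose proof (proj_orbit_near_line g l1 t1 x c Hl1 Hx n).
  pose proof (proj_orbit_near_line h l2 t2 y d Hl2 Hy m).
  set (u := tpt_base (pi (xact (gpow g n) x))) in *.
  set (v := tpt_base (pi (xact (gpow h m) y))) in *.
  pose proof (dT_triangle T (l1 (c + n * t1)%Z) u (l2 (d + m * t2)%Z)).
  pose proof (dT_triangle T u v (l2 (d + m * t2)%Z)).
  pose proof (dT_sym T (l1 (c + n * t1)%Z) u). pose proof (dT_sym T u v).
  lia.
Qed.

Lemma orbit_dist_le f x n n' :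
  (dX (xact (gpow f n) x) (xact (gpow f n') x) <= Z.to_nat (Z.abs (n - n')) * dX (xact f x) x)%nat.
Proof.
  apply (gdist_Zseq_le _ _ (@adj_sym X) X_conn (fun k => xact (gpow f k) x)). intro k.
  set (F := fun k => xact (gpow f k) x). fold (F (k + 1)%Z) (F k).
  pose proof (translates_gpow _ _ xact f F 1 (translates_orbit _ _ xact f x) k) as Hk.
  replace (F (k + 1)%Z) with (xact (gpow f k) (F 1%Z)) by (rewrite Hk; f_equal; lia).
  replace (F k) with (xact (gpow f k) (F 0%Z)) by (rewrite Hk; f_equal; lia).
  rewrite (gdist_act _ _ xact _ X_conn xact_aut). unfold F. simpl. rewrite actM, !act1. lia.
Qed.

(* Conjugating by [a a0^-1] carries the axis of [a0 g a0^-1] into that of [a g a^-1], so the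
   point [xs] is transported into the competitors for the minimal displacement of [x0]. *)
Lemma minimal_displacement_le g a a0 l l0 t t0 x0 xs :
  line l -> line l0 -> t0 <> 0%Z ->
  translates tact (conj a g) l t -> translates tact (conj a0 g) l0 t0 -> on_line l0 (pi xs) ->
  (forall x, on_line l (pi x) -> (dX (xact (conj a g) x0) x0 <= dX (xact (conj a g) x) x)%nat) ->
  (dX (xact (conj a g) x0) x0 <= dX (xact (conj a0 g) xs) xs)%nat.
Proof.
  intros L L0 Ht0 Hl Hl0 Hxs Hmin.
  set (c := gmul a (ginv a0)).
  destruct (axis_conj_transport G T tact tact_aut g a a0 l l0 t t0 L L0 Ht0 Hl Hl0) as [Hsub _].
  rewrite <- (gdist_act _ _ xact _ X_conn xact_aut c (xact (conj a0 g) xs) xs).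
  unfold c. rewrite <- act_conj_transport. apply Hmin.
  apply (tdist_eq0_on_line T l _ (tpact tact c (pi xs)) (pi_wf _)
           (tpt_wf_tpact G T tact tact_aut c _ (pi_wf xs)) (pi_equiv c xs)).
  apply (on_line_sub T l (fun k => tact c (l0 k))); auto.
  - apply line_act; auto.
  - apply on_line_tpact, Hxs.
Qed.

Section Bound.
Variables (kappa : nat) (g h : G).
Hypothesis tact_acyl : acylindrical tact kappa.
Hypotheses (g_lox : loxodromic tact g) (h_lox : loxodromic tact h).

Lemma orbit_nbhd_diam_le (e : nat) a0 l0 t0 xs b0 k0 s0 :
  line l0 -> t0 <> 0%Z -> translates tact (conj a0 g) l0 t0 -> on_line l0 (pi xs) ->
  line k0 -> s0 <> 0%Z -> translates tact (conj b0 h) k0 s0 ->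
  forall a b, ~ common_nontrivial_power (conj a g) (conj b h) ->
  forall alpha_g alpha_h, is_axis tact (conj a g) alpha_g -> is_axis tact (conj b h) alpha_h ->
  forall x0 y0, alpha_g (pi x0) ->
  (forall x, alpha_g (pi x) -> (dX (xact (conj a g) x0) x0 <= dX (xact (conj a g) x) x)%nat) ->
  alpha_h (pi y0) ->
  forall m m' n n',
  (dX (xact (gpow (conj b h) m) y0) (xact (gpow (conj a g) n) x0) <= e)%nat ->
  (dX (xact (gpow (conj b h) m') y0) (xact (gpow (conj a g) n') x0) <= e)%nat ->
  (dX (xact (gpow (conj b h) m) y0) (xact (gpow (conj b h) m') y0) <=
     2 * e + (2 * (e + 6) + kappa + 3 + Z.to_nat (Z.abs (t0 * s0))) * dX (xact (conj a0 g) xs) xs)%nat.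
Proof.
  intros L0 Ht0 Hl0 Hxs K0 Hs0 Hk0 a b Hncp alg alh Haxg Haxh x0 y0 Hx0 Hmin Hy0 m m' n n' Hn Hn'.
  destruct (axis_translation G T tact tact_aut g a alg g_lox Haxg) as [l1 [t1 [L1 [Ht1 [Hl1 I1]]]]].
  destruct (axis_translation G T tact tact_aut h b alh h_lox Haxh) as [l2 [t2 [L2 [Ht2 [Hl2 I2]]]]].
  destruct (axis_conj_transport G T tact tact_aut g a a0 l1 l0 t1 t0 L1 L0 Ht0 Hl1 Hl0) as [_ Ht10].
  destruct (axis_conj_transport G T tact tact_aut h b b0 l2 k0 t2 s0 L2 K0 Hs0 Hl2 Hk0) as [_ Ht20].
  pose proof (minimal_displacement_le g a a0 l1 l0 t1 t0 x0 xs L1 L0 Ht0 Hl1 Hl0 Hxs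
                (fun x H => Hmin x (proj2 (I1 _) H))) as HD.
  destruct (on_line_tpt_base T l1 _ (proj1 (I1 _) Hx0)) as [c0 Hc0].
  destruct (on_line_tpt_base T l2 _ (proj1 (I2 _) Hy0)) as [d0 Hd0].
  pose proof (fellow_travel_bound G T tact kappa tact_acyl _ _ l1 l2 t1 t2
                L1 L2 Ht1 Ht2 Hl1 Hl2 Hncp (e + 6) _ _ _ _
                (close_orbits_close_lines _ _ l1 l2 t1 t2 x0 y0 c0 d0 e Hl1 Hl2 Hc0 Hd0 n m Hn)
                (close_orbits_close_lines _ _ l1 l2 t1 t2 x0 y0 c0 d0 e Hl1 Hl2 Hc0 Hd0 n' m' Hn'))
    as Hgap.
  assert (Hnn : (Z.to_nat (Z.abs (n - n')) <= 2 * (e + 6) + kappa + 3 + Z.to_nat (Z.abs (t0 * s0)))%nat).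
  { rewrite !Z.abs_mul in *. replace (c0 + n * t1 - (c0 + n' * t1))%Z with ((n - n') * t1)%Z in Hgap
      by ring. rewrite Z.abs_mul in Hgap. nia. }
  pose proof (orbit_dist_le (conj a g) x0 n n').
  pose proof (Nat.mul_le_mono _ _ _ _ Hnn HD).
  pose proof (gdist_triangle _ _ X_conn (xact (gpow (conj b h) m) y0) (xact (gpow (conj a g) n) x0)
                (xact (gpow (conj b h) m') y0)).
  pose proof (gdist_triangle _ _ X_conn (xact (gpow (conj a g) n) x0) (xact (gpow (conj a g) n') x0)
                (xact (gpow (conj b h) m') y0)).
  rewrite (gdist_sym _ _ (@adj_sym X) X_conn (xact (gpow (conj a g) n') x0)) in *.
  lia.
Qed.

End Bound.

End Projection.

Theorem lemma2p7
  (G : Group) (T : tree) (tact : action G T)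
  (X : graph) (xact : action G X) (pi : X -> TPt T) (kappa : nat) (g h : G) :
  torsion_free G ->
  by_automorphisms (@tadj T) tact ->
  acylindrical tact kappa ->
  connected (@adj X) ->
  by_automorphisms (@adj X) xact ->
  (forall x, tpt_wf (pi x)) ->
  (forall (a : G) (x : X), tdist (pi (xact a x)) (tpact tact a (pi x)) = 0) ->
  (forall x y : X, tdist (pi x) (pi y) <= INR (gdist (@adj X) x y)) ->
  loxodromic tact g -> loxodromic tact h ->
  ~ common_nontrivial_power g h ->
  forall eps : R, 0 < eps ->
  exists K : R,
    forall a b : G,
    ~ common_nontrivial_power (conj a g) (conj b h) ->
    forall (alpha_g alpha_h : TPt T -> Prop),
    is_axis tact (conj a g) alpha_g -> is_axis tact (conj b h) alpha_h ->
    forall x0 y0 : X,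
    alpha_g (pi x0) ->
    (forall x : X, alpha_g (pi x) ->
       (gdist (@adj X) (xact (conj a g) x0) x0 <= gdist (@adj X) (xact (conj a g) x) x)%nat) ->
    alpha_h (pi y0) ->
    forall m m' : Z,
    in_nbhd_orbit xact eps (conj a g) x0 (xact (gpow (conj b h) m) y0) ->
    in_nbhd_orbit xact eps (conj a g) x0 (xact (gpow (conj b h) m') y0) ->
    INR (gdist (@adj X) (xact (gpow (conj b h) m) y0) (xact (gpow (conj b h) m') y0)) <= K.
Proof.
  intros _ Haut Hacyl Hconn Hxaut Hwf Hequiv Hlip Hlg Hlh _ eps Heps.
  destruct (archimed eps) as [Hup _].
  set (e := Z.to_nat (up eps)).
  assert (He : eps <= INR e).
  { unfold e. rewrite INR_IZR_INZ, Z2Nat.id; [lra|]. apply le_IZR. lra. }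
  destruct (classic (exists a0 al0 xs, is_axis tact (conj a0 g) al0 /\ al0 (pi xs)))
    as [[a0 [al0 [xs [Hax0 Hxs]]]]|Hnog];
    [| exists 0; intros a b _ alg alh Haxg _ x0 y0 Hx0; exfalso; apply Hnog; eauto].
  destruct (classic (exists b0 be0, is_axis tact (conj b0 h) be0)) as [[b0 [be0 Hbx0]]|Hnoh];
    [| exists 0; intros a b _ alg alh _ Haxh; exfalso; apply Hnoh; eauto].
  destruct (axis_translation G T tact Haut g a0 al0 Hlg Hax0) as [l0 [t0 [L0 [Ht0 [Hl0 I0]]]]].
  destruct (axis_translation G T tact Haut h b0 be0 Hlh Hbx0) as [k0 [s0 [K0 [Hs0 [Hk0 _]]]]].
  exists (INR (2 * e + (2 * (e + 6) + kappa + 3 + Z.to_nat (Z.abs (t0 * s0)))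
                         * gdist (@adj X) (xact (conj a0 g) xs) xs)).
  intros a b Hncp alg alh Haxg Haxh x0 y0 Hx0 Hmin Hy0 m m' [n Hn] [n' Hn'].
  apply le_INR.
  apply (orbit_nbhd_diam_le G T tact X xact pi Haut Hconn Hxaut Hwf Hequiv Hlip kappa g h
           Hacyl Hlg Hlh e a0 l0 t0 xs b0 k0 s0 L0 Ht0 Hl0 (proj1 (I0 _) Hxs) K0 Hs0 Hk0
           a b Hncp alg alh Haxg Haxh x0 y0 Hx0 Hmin Hy0 m m' n n'); apply INR_le; lra.
Qed.
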